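(* Let $G$ be a $P_6$-free graph, let $\Omega$ be a potential maximal clique of $G$, and let $C^1,C^2$ be two different connected components of $G-\Omega$. Then $N(C^1)\setminus N(C^2)$ is fully adjacent to $C^1$, or $N(C^2)\setminus N(C^1)$ is fully adjacent to $C^2$.
   Context: All graphs are finite, simple and undirected. $P_6$ is the path on six vertices; $G$ is $P_6$-free if it has no induced subgraph isomorphic to $P_6$. For a vertex set $C$, $N(C)$ is the set of vertices outside $C$ with a neighbour in $C$. A set $Z$ is fully adjacent to $C$ if every vertex of $Z$ is adjacent to every vertex of $C$. A triangulation of $G$ is a set $F$ of non-edges such that $(V(G),E(G)\cup F)$ is chordal; it is minimal if no proper subset is a triangulation. A potential maximal clique of $G$ is a maximal clique of $(V(G),E(G)\cup F)$ for some minimal triangulation $F$. *)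

From mathcomp Require Import all_boot.
Set Implicit Arguments. Unset Strict Implicit. Unset Printing Implicit Defensive.

Definition simple_graph (T : finType) (e : rel T) : Prop :=
  symmetric e /\ irreflexive e.

Definition has_induced_P6 (T : finType) (e : rel T) : Prop :=
  exists f : 'I_6 -> T, injective f /\
    forall i j : 'I_6, e (f i) (f j) = (i.+1 == j :> nat) || (j.+1 == i :> nat).

Definition P6_free (T : finType) (e : rel T) : Prop := ~ has_induced_P6 e.

Definition has_induced_cycle (T : finType) (e : rel T) (k : nat) : Prop :=
  exists f : 'I_k -> T, injective f /\
    forall i j : 'I_k, e (f i) (f j) =
      ((i.+1 %% k == j :> nat) || (j.+1 %% k == i :> nat)).

Definition chordal (T : finType) (e : rel T) : Prop :=
  forall k, 4 <= k -> ~ has_induced_cycle e k.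

Definition fill (T : finType) (e : rel T) (F : {set {set T}}) : rel T :=
  fun x y => (x != y) && (e x y || ([set x; y] \in F)).

Definition nonedge_set (T : finType) (e : rel T) (F : {set {set T}}) : Prop :=
  forall A, A \in F -> exists x y, [/\ x != y, A = [set x; y] & ~~ e x y].

Definition triangulation (T : finType) (e : rel T) (F : {set {set T}}) : Prop :=
  nonedge_set e F /\ chordal (fill e F).

Definition minimal_triangulation (T : finType) (e : rel T) (F : {set {set T}}) : Prop :=
  triangulation e F /\ forall F' : {set {set T}}, F' \proper F -> ~ triangulation e F'.

Definition is_clique (T : finType) (e : rel T) (K : {set T}) : Prop :=
  forall x y, x \in K -> y \in K -> x != y -> e x y.

Definition is_maximal_clique (T : finType) (e : rel T) (K : {set T}) : Prop :=
  is_clique e K /\ forall K' : {set T}, K \proper K' -> ~ is_clique e K'.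

Definition potential_maximal_clique (T : finType) (e : rel T) (W : {set T}) : Prop :=
  exists F, minimal_triangulation e F /\ is_maximal_clique (fill e F) W.

Definition restrict (T : finType) (e : rel T) (S : {set T}) : rel T :=
  fun x y => [&& e x y, x \in S & y \in S].

Definition connected_set (T : finType) (e : rel T) (C : {set T}) : Prop :=
  forall x y, x \in C -> y \in C -> connect (restrict e C) x y.

Definition component_of (T : finType) (e : rel T) (W C : {set T}) : Prop :=
  [/\ C != set0, [disjoint C & W], connected_set e C &
      forall C' : {set T}, C \proper C' -> [disjoint C' & W] -> ~ connected_set e C'].

Definition nbh (T : finType) (e : rel T) (C : {set T}) : {set T} :=
  [set v | (v \notin C) && [exists u in C, e u v]].

Definition fully_adjacent (T : finType) (e : rel T) (Z C : {set T}) : Prop :=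
  forall z c, z \in Z -> c \in C -> e z c.

(* Suppose both alternatives fail: some x in N(C1) \ N(C2) misses a vertex of C1
   and some y in N(C2) \ N(C1) misses a vertex of C2.  Walking inside C1 from a
   neighbour of x to a non-neighbour gives an edge a1 a2 with x ~ a1, x !~ a2, and
   likewise an edge b1 b2 of C2 for y; distinct components of G - W are not
   adjacent, and x, y in W each see only one of C1, C2.  If x ~ y, then
   a2 a1 x y b1 b2 is an induced P6.  Otherwise, W being a potential maximal
   clique, some component D of G - W has both x and y in its neighbourhood, and a
   shortest way from x towards y through D extends a1 x (or a2 a1 x) to an
   induced P6.  The existence of D rests on the fact that an induced cycle cannot
   cross a clique separator: a minimal triangulation therefore adds no edge from
   a component C to a vertex outside C and N(C), and if no component saw both x
   and y, the fill edge xy could be dropped. *)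

From mathcomp Require Import all_boot zify.
From Stdlib Require Import Classical_Prop.

Set Implicit Arguments. Unset Strict Implicit. Unset Printing Implicit Defensive.

Section Neighbourhoods.
Variable T : finType.
Implicit Types (e r : rel T) (C : {set T}).

Lemma nbhP e C v :
  reflect (v \notin C /\ exists2 u, u \in C & e u v) (v \in nbh e C).
Proof.
rewrite inE; apply: (iffP andP) => -[vC nbr]; split => //.
  by case/existsP: nbr => u /andP[uC euv]; exists u.
by case: nbr => u uC euv; apply/existsP; exists u; rewrite uC.
Qed.

Lemma mem_nbh e C u v : u \in C -> v \notin C -> e u v -> v \in nbh e C.
Proof. by move=> uC vC euv; apply/nbhP; split=> //; exists u. Qed.

Lemma nbh_subrel e r C : subrel e r -> nbh e C \subset nbh r C.
Proof.
move=> er; apply/subsetP => v /nbhP[vC [u uC /er]]; exact: mem_nbh.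
Qed.

End Neighbourhoods.

Section Graphs.
Variables (T : finType) (e : rel T).
Implicit Types (A B C D R W : {set T}).

Lemma region_nonadjacent W R a b :
  nbh e R \subset W -> a \in R -> b \notin R -> b \notin W -> ~~ e a b.
Proof.
by move=> R_nbh aR bR; apply: contra => ab; apply: (subsetP R_nbh); apply: mem_nbh ab.
Qed.

Lemma connected_set_exit C (P : pred T) s t :
  connected_set e C -> s \in C -> t \in C -> P s -> ~~ P t ->
  exists u v, [/\ u \in C, v \in C, e u v, P u & ~~ P v].
Proof.
move=> C_conn sC tC Ps Pt; case/connectP: (C_conn s t sC tC) => p.
elim: p s sC Ps => [|z p IHp] s sC Ps /=; first by move=> _ ts; rewrite ts Ps in Pt.
case/andP=> /and3P[esz _ zC] zp tE; case Pz: (P z); first exact: IHp Pz zp tE.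
by exists s, z; rewrite Pz.
Qed.

Lemma connected_sub_region W R D c :
  nbh e R \subset W -> connected_set e D -> [disjoint D & W] ->
  c \in D -> c \in R -> D \subset R.
Proof.
move=> R_nbh D_conn DW cD cR; apply/subsetP => v vD; apply: contraT => vR.
have [a [b [aD bD eab aR bR]]] := connected_set_exit D_conn cD vD cR vR.
by move: (subsetP R_nbh b (mem_nbh aR bR eab)); rewrite (disjointFr DW bD).
Qed.

Lemma connected_disjoint_region W R D z :
  nbh e R \subset W -> connected_set e D -> [disjoint D & W] ->
  z \in nbh e D -> z \notin R -> z \notin nbh e R -> [disjoint D & R].
Proof.
move=> R_nbh D_conn DW /nbhP[_ [w wD wz]] zR zNR; apply/pred0P => d /=.
apply/negP => /andP[dD dR]; have DR := connected_sub_region R_nbh D_conn DW dD dR.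
by move/negP: zNR; apply; apply: mem_nbh (subsetP DR w wD) zR wz.
Qed.

Hypothesis e_sym : symmetric e.

Lemma restrict_sym A : symmetric (restrict e A).
Proof. by move=> x y; rewrite /restrict e_sym (andbC (x \in A)). Qed.

Lemma connect_restrict_sub A B x y :
  A \subset B -> connect (restrict e A) x y -> connect (restrict e B) x y.
Proof.
move=> sAB; apply: connect_sub => a b /and3P[eab aA bA]; apply: connect1.
by rewrite /restrict eab !(subsetP sAB).
Qed.

Lemma connected_set_from A u :
  u \in A -> (forall v, v \in A -> connect (restrict e A) u v) ->
  connected_set e A.
Proof.
move=> uA u_conn v w vA wA; apply: connect_trans (u_conn w wA).
by rewrite (sym_connect_sym (@restrict_sym A)) u_conn.
Qed.

Lemma component_nbh_sub W C : component_of e W C -> nbh e C \subset W.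
Proof.
case=> _ CW C_conn C_max; apply/subsetP => v /nbhP[vC [u uC euv]].
apply: contraT => vW; case: (C_max (v |: C)).
- by rewrite properUr // sub1set.
- by rewrite disjoints_subset subUset sub1set inE vW -disjoints_subset.
- apply: (@connected_set_from _ u); first by rewrite !inE uC orbT.
  move=> z; rewrite !inE => /predU1P[->|zC].
    by apply: connect1; rewrite /restrict euv !inE eqxx uC orbT.
  by apply: connect_restrict_sub (C_conn _ _ uC zC); apply: subsetUr.
Qed.

Lemma component_eq W C1 C2 c :
  component_of e W C1 -> component_of e W C2 -> c \in C1 -> c \in C2 -> C1 = C2.
Proof.
move=> C1_comp C2_comp cC1 cC2; apply/eqP; rewrite eqEsubset.
have [[_ C1W C1_conn _] [_ C2W C2_conn _]] := (C1_comp, C2_comp).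
rewrite (connected_sub_region (component_nbh_sub C2_comp) C1_conn C1W cC1 cC2).
by rewrite (connected_sub_region (component_nbh_sub C1_comp) C2_conn C2W cC2 cC1).
Qed.

Definition reach W w : {set T} := [set v | connect (restrict e (~: W)) w v].

Lemma reach_region W w : w \notin W ->
  [/\ w \in reach W w, [disjoint reach W w & W], connected_set e (reach W w)
    & nbh e (reach W w) \subset W].
Proof.
move=> wW; have w_reach : w \in reach W w by rewrite inE connect0.
have reach_W : reach W w \subset ~: W.
  apply/subsetP => v; rewrite inE => /connectP[p].
  case/lastP: p => [_ ->|p z]; first by rewrite inE.
  by rewrite rcons_path last_rcons => /andP[_ /and3P[_ _ zW]] ->.
split => //; first by rewrite disjoints_subset.
- apply: (connected_set_from w_reach) => v; rewrite inE => /connectP[p p_path ->].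
  have p_reach : all [in reach W w] (w :: p).
    by apply/allP => z /(path_connect p_path); rewrite inE.
  apply/connectP; exists p => //; apply: (sub_in_path _ p_reach p_path).
  by move=> a b aR bR /and3P[eab _ _]; rewrite /restrict eab aR bR.
- apply/subsetP => v /nbhP[vR [u uR euv]]; apply: contraT => vW; case/negP: vR.
  have wu : connect (restrict e (~: W)) w u by rewrite inE in uR.
  rewrite inE (connect_trans wu) // connect1 //.
  by rewrite /restrict euv (subsetP reach_W) // inE vW.
Qed.

Lemma attachment_edge C x c :
  connected_set e C -> x \in nbh e C -> c \in C -> ~~ e x c ->
  exists a1 a2, [/\ a1 \in C, a2 \in C, e a1 a2, e x a1 & ~~ e x a2].
Proof.
move=> C_conn /nbhP[_ [u uC ux]] cC xc; rewrite e_sym in ux.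
exact: connected_set_exit C_conn uC cC ux xc.
Qed.

Lemma link_cases D x y :
  connected_set e D -> x \in nbh e D -> y \in nbh e D ->
  [\/ exists2 c, c \in D & e x c && e y c,
      exists c d, [/\ c \in D, d \in D, [&& e x c, e c d & e d y]
                    & ~~ e x d && ~~ e c y]
    | exists c u v, [/\ c \in D, u \in D, v \in D, [&& e x c, e c u & e u v]
                      & [&& ~~ e x u, ~~ e x v & ~~ e c v]]].
Proof.
move=> D_conn /nbhP[_ [c0 c0D xc0]] /nbhP[_ [d0 d0D yd0]].
rewrite e_sym in xc0; rewrite e_sym in yd0.
have [/exists_inP[c cD xyc]|no_common] := boolP [exists c in D, e x c && e y c].
  by apply: Or31; exists c.
have common_free c : c \in D -> e x c -> ~~ e y c.
  move=> cD xc; apply: contra no_common => yc.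
  by apply/exists_inP; exists c; rewrite ?xc.
pose near v := e x v || [exists c in D, e x c && e c v].
have [|far_d0] := boolP (near d0).
  case/orP=> [xd0|/exists_inP[c cD /andP[xc cd0]]].
    by move: (common_free d0 d0D xd0); rewrite yd0.
  apply: Or32; exists c, d0; split=> //; first by rewrite xc cd0 e_sym.
  rewrite (e_sym c) (common_free c) // andbT.
  by apply/negP => xd0; move: (common_free d0 d0D xd0); rewrite yd0.
have near_c0 : near c0 by rewrite /near xc0.
have [u [v [uD vD uv near_u far_v]]] :=
  connected_set_exit D_conn c0D d0D near_c0 far_d0.
move: far_v; rewrite /near negb_or => /andP[xv no_cv].
have xu : ~~ e x u.
  by apply: contra no_cv => xu; apply/exists_inP; exists u; rewrite ?xu.
move: near_u; rewrite /near (negbTE xu) => /exists_inP[c cD /andP[xc cu]].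
apply: Or33; exists c, u, v; split=> //; first by rewrite xc cu.
by rewrite xu xv; apply: contra no_cv => cv; apply/exists_inP; exists c; rewrite ?xc.
Qed.

End Graphs.

Section InducedCycles.
Variables (T : finType) (r : rel T).

(* [h] enumerates an induced k-cycle of [r], periodically in its [nat] index. *)
Definition cycle_walk (k : nat) (h : nat -> T) : Prop :=
  (forall m n, (h m == h n) = (m == n %[mod k])) /\
  (forall m n, r (h m) (h n) = (m.+1 == n %[mod k]) || (n.+1 == m %[mod k])).

Lemma induced_cycle_walk k (f : 'I_k -> T) : 0 < k -> injective f ->
  (forall i j : 'I_k,
     r (f i) (f j) = (i.+1 %% k == j :> nat) || (j.+1 %% k == i :> nat)) ->
  exists h, cycle_walk k h /\ forall i : 'I_k, h i = f i.
Proof.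
move=> k_gt0 f_inj f_adj; pose h n := f (Ordinal (ltn_pmod n k_gt0)).
exists h; split=> [|i]; last by congr f; apply: val_inj; rewrite /= modn_small.
split=> m n; first by rewrite (inj_eq f_inj).
have modS x : (x %% k).+1 %% k = x.+1 %% k by rewrite -addn1 modnDml addn1.
by rewrite f_adj /= !modS.
Qed.

Lemma cycle_walk_shift k h m :
  cycle_walk k h -> cycle_walk k (fun n => h (m + n)).
Proof. by case=> h_eq h_adj; split=> a b; rewrite ?h_eq ?h_adj -?addnS !eqn_modDl. Qed.

Lemma cycle_walk_neighbours k h : 3 < k -> cycle_walk k h ->
  [/\ r (h 0) (h 1), r (h 0) (h k.-1), h 0 \notin [set h 1; h k.-1],
      h 1 != h k.-1 & ~~ r (h 1) (h k.-1)].
Proof.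
move=> k_gt3 [h_eq h_adj].
have k_gt2 : 2 < k by rewrite ltnW.
rewrite !inE !h_eq !h_adj prednK ?modnn ?mod0n ?modn_small //; try lia.
by rewrite !eqxx orbT; split=> //; lia.
Qed.

Lemma cycle_walk_nonadjacent k h a b : cycle_walk k h ->
  0 < a -> a.+1 < b -> b < k -> h a != h b /\ ~~ r (h a) (h b).
Proof.
case=> h_eq h_adj a_gt0 a1b bk; have ak : a < k := ltn_trans (ltnW a1b) bk.
rewrite h_eq h_adj (modn_small ak) (modn_small bk) (modn_small (ltn_trans a1b bk)).
rewrite (ltn_eqF a1b) neq_ltn ltnW //=.
split=> //; have [b1k|kb1|<-] := ltngtP b.+1 k.
- by rewrite modn_small // gtn_eqF // ltnW // ltnW.
- by rewrite ltnNge bk in kb1.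
- by rewrite modnn eq_sym gtn_eqF.
Qed.

Variables (C S : {set T}).
Hypotheses (C_nbh : nbh r C \subset S) (S_clique : is_clique r S).

Lemma cycle_walk_sep0 k h : 0 < k -> cycle_walk k h ->
  h 0 \in C -> forall d, h d \in C :|: S.
Proof.
move=> k_gt0 walk h0C d0; have [h_eq h_adj] := walk.
have h_mod n : h (n %% k) = h n by apply/eqP; rewrite h_eq modn_mod.
have exit m n : h m \in C -> h n \notin C -> r (h m) (h n) -> h n \in S.
  by move=> mC nC mn; apply: (subsetP C_nbh); apply: mem_nbh mn.
rewrite -h_mod; have dk := ltn_pmod d0 k_gt0; move: (d0 %% k) dk => d dk.
apply: contraT; rewrite inE negb_or => /andP[dC dS].
(* The first and the last index outside [C] both lie in [S], and form a chord. *)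
pose out := [pred n | h n \notin C].
have first_out : exists n, out n by exists d.
have [a aC a_min] := ex_minnP first_out.
have ad : a <= d by apply: a_min.
have a_gt0 : 0 < a by case: a aC {a_min ad} => //; rewrite /out /= h0C.
have aS : h a \in S.
  case: a a_gt0 aC a_min {ad} => // a _ aC a_min.
  apply: (exit a) => //; last by rewrite h_adj eqxx.
  by apply: contraT => /a_min; rewrite ltnn.
have last_out : exists n, (n < k) && out n by exists d; rewrite dk.
have last_ub n : (n < k) && out n -> n <= k by case/andP=> /ltnW.
have [b /andP[bk bC] b_max] := ex_maxnP last_out last_ub.
have db : d <= b by apply: b_max; rewrite /= dk.
have bS : h b \in S.
  apply: (exit b.+1) => //; last by rewrite h_adj eqxx orbT.
  have [b1k|kb1] := ltnP b.+1 k.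
    by apply: contraT => b1C; have := b_max b.+1; rewrite /= b1k ltnn => /(_ b1C).
  have -> : b.+1 = k by apply/eqP; rewrite eqn_leq bk kb1.
  by rewrite -h_mod modnn.
have ad' : a < d by rewrite ltn_neqAle ad andbT; apply: contraNneq dS => <-.
have db' : d < b by rewrite ltn_neqAle db andbT; apply: contraNneq dS => ->.
have [ab ab_nonadj] := cycle_walk_nonadjacent walk a_gt0 (leq_ltn_trans ad' db') bk.
by rewrite (S_clique aS bS ab) in ab_nonadj.
Qed.

Lemma cycle_walk_sep k h m : 0 < k -> cycle_walk k h ->
  h m \in C -> forall d, h d \in C :|: S.
Proof.
move=> k_gt0 walk hmC d; have hm0C : h (m + 0) \in C by rewrite addn0.
have -> : h d = h (m + (k - m %% k + d)).
  apply/eqP; rewrite walk.1 eq_sym addnA -modnDml -(modnDml m).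
  by rewrite subnKC ?modnn // ltnW // ltn_pmod.
exact: cycle_walk_sep0 k_gt0 (cycle_walk_shift m walk) hm0C _.
Qed.

End InducedCycles.

Section MinimalTriangulations.
Variables (T : finType) (e : rel T).
Hypothesis e_sym : symmetric e.
Implicit Types (F : {set {set T}}) (P : pred {set T}) (A C W : {set T}).

Lemma fill_sym F : symmetric (fill e F).
Proof. by move=> x y; rewrite /fill eq_sym e_sym setUC. Qed.

Lemma fill_filter F P x y :
  P [set x; y] -> fill e [set A in F | P A] x y = fill e F x y.
Proof. by move=> Pxy; rewrite /fill inE Pxy andbT. Qed.

Lemma fill_filter_subrel F P : subrel (fill e [set A in F | P A]) (fill e F).
Proof.
move=> x y /andP[xy]; rewrite /fill xy inE => /orP[-> //|/andP[xyF _]].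
by rewrite xyF orbT.
Qed.

Lemma minimal_triangulation_filter F P A :
  minimal_triangulation e F -> A \in F -> ~~ P A ->
  ~ chordal (fill e [set B in F | P B]).
Proof.
case=> [[F_nonedge _] F_min] AF nPA F'_chordal.
apply: (F_min [set B in F | P B]); last first.
  by split=> // B; rewrite inE => /andP[/F_nonedge].
apply/properP; split; first by apply/subsetP => B; rewrite inE => /andP[].
by exists A; rewrite // inE (negbTE nPA) andbF.
Qed.

Lemma nbh_fill_minimal F W C :
  minimal_triangulation e F -> is_clique (fill e F) W -> nbh e C \subset W ->
  nbh (fill e F) C \subset nbh e C.
Proof.
move=> F_mt W_clique C_nbh; apply/subsetP => x /nbhP[xC [u uC fux]].
apply/negPn/negP => xN; have [[_ F_chordal] _] := F_mt.
(* Dropping the fill edges that cross from [C] to outside [C :|: nbh e C] keeps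
   the fill chordal, as no induced cycle can cross the clique [nbh e C]. *)
have nonedge a b : a \in C -> b \notin C -> b \notin nbh e C -> ~~ e a b.
  by move=> aC bC; apply: contra; apply: mem_nbh.
pose cross A := ~~ (A \subset ~: C) && ~~ (A \subset C :|: nbh e C).
have cross_out a b : a \in C -> b \notin C -> b \notin nbh e C -> cross [set a; b].
  move=> aC bC bN; rewrite /cross !subUset !sub1set !in_setC !in_setU.
  by rewrite aC (negbTE bC) (negbTE bN).
have uxF : [set u; x] \in F.
  by move: fux; rewrite /fill (negbTE (nonedge _ _ uC xC xN)) => /andP[].
have ux_cross : ~~ [pred A | ~~ cross A] [set u; x] by rewrite /= negbK cross_out.
apply: (minimal_triangulation_filter F_mt uxF ux_cross).
move=> k k_gt3 [f [f_inj f_adj]]; have k_gt0 : 0 < k by apply: leq_trans k_gt3.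
set F' := [set B in F | [pred A | ~~ cross A] B] in f_adj.
have F'_nbh : nbh (fill e F') C \subset nbh e C.
  apply/subsetP => b /nbhP[bC [a aC fab]]; apply: contraT => bN; move: fab.
  rewrite /fill inE (negbTE (nonedge _ _ aC bC bN)) /=.
  by rewrite (cross_out _ _ aC bC bN) !andbF.
have F'_clique : is_clique (fill e F') (nbh e C).
  move=> a b aN bN ab; rewrite fill_filter ?W_clique ?(subsetP C_nbh) //.
  by rewrite /= /cross !subUset !sub1set !in_setU aN bN !orbT andbF.
have no_cross i j : ~~ cross [set f i; f j].
  have [/existsP[i0 fi0C]|/existsPn noC] := boolP [exists i, f i \in C].
    have [h [walk hf]] := induced_cycle_walk k_gt0 f_inj f_adj.
    have hi0C : h i0 \in C by rewrite hf.
    have sep := cycle_walk_sep F'_nbh F'_clique k_gt0 walk hi0C.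
    by rewrite /cross !subUset !sub1set -!hf !sep andbF.
  by rewrite /cross !subUset !sub1set !in_setC !in_setU !noC.
apply: (F_chordal k k_gt3); exists f; split=> // i j.
by rewrite -f_adj fill_filter //= no_cross.
Qed.

Lemma pmc_nonadjacent_nbh F W x y :
  minimal_triangulation e F -> is_clique (fill e F) W ->
  x \in W -> y \in W -> x != y -> ~~ e x y ->
  exists C, [/\ [disjoint C & W], connected_set e C, nbh e C \subset W,
                x \in nbh e C & y \in nbh e C].
Proof.
move=> F_mt W_clique xW yW xy exy; apply: NNPP => no_C.
(* Then the fill edge xy can be dropped: on an induced cycle through x and y,
   each cycle-neighbour of x lies in W (otherwise its component, whose
   neighbourhood contains x but not y, would be crossed by the cycle), so the two
   cycle-neighbours of x would be joined by a chord. *)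
have [[_ F_chordal] _] := F_mt.
have xyF : [set x; y] \in F.
  by move: (W_clique _ _ xW yW xy); rewrite /fill (negbTE exy) => /andP[].
have xy_out : ~~ [pred A | A != [set x; y]] [set x; y] by rewrite /= eqxx.
apply: (minimal_triangulation_filter F_mt xyF xy_out).
move=> k k_gt3 [f [f_inj f_adj]]; have k_gt0 : 0 < k by apply: leq_trans k_gt3.
set F' := [set B in F | [pred A | A != [set x; y]] B] in f_adj.
have fill_F' a b : [set a; b] != [set x; y] -> fill e F' a b = fill e F a b.
  exact: fill_filter.
have [/existsP[i /existsP[j /eqP xy_ij]]|/existsPn no_xy] :=
  boolP [exists i, exists j, [set f i; f j] == [set x; y]]; last first.
  apply: (F_chordal k k_gt3); exists f; split=> // i j; rewrite -f_adj fill_F' //.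
  by apply: contraNneq (no_xy i) => E; apply/existsP; exists j; rewrite E.
have [h [walk hf]] := induced_cycle_walk k_gt0 f_inj f_adj.
have on_cycle z : z \in [set x; y] -> exists d, h d = z.
  by rewrite -xy_ij in_set2 => /orP[]/eqP->; [exists i | exists j].
have [dx hx] := on_cycle x (set21 x y).
have [dy hy] := on_cycle y (set22 x y).
have W_nbr d : fill e F' x (h d) -> h d \in W.
  move=> xd; apply: contraT => dW.
  have [dR RW R_conn R_nbh] := reach_region e_sym dW.
  set R := reach e W (h d) in dR RW R_conn R_nbh.
  have R_fill := nbh_fill_minimal F_mt W_clique R_nbh.
  have yR : y \notin R by rewrite (disjointFl RW yW).
  have yN : y \notin nbh e R.
    apply/negP => yN; apply: no_C; exists R; split=> //.
    apply: (subsetP R_fill); apply: mem_nbh dR (negbT (disjointFl RW xW)) _.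
    by rewrite fill_sym; apply: fill_filter_subrel xd.
  have F'_nbh : nbh (fill e F') R \subset nbh e R.
    exact: subset_trans (nbh_subrel _ (@fill_filter_subrel _ _)) R_fill.
  have F'_clique : is_clique (fill e F') (nbh e R).
    move=> a b aN bN ab; rewrite fill_F' ?W_clique ?(subsetP R_nbh) //.
    apply: contraNneq yN => E; have : y \in [set a; b] by rewrite E set22.
    by rewrite in_set2 => /orP[]/eqP->.
  have := cycle_walk_sep F'_nbh F'_clique k_gt0 walk dR dy.
  by rewrite hy in_setU (negbTE yR) (negbTE yN).
have [adj1 adj2 x_nbrs nbrs_ne nbrs_nonadj] :=
  cycle_walk_neighbours k_gt3 (cycle_walk_shift dx walk).
rewrite /= addn0 hx in adj1 adj2 x_nbrs nbrs_ne nbrs_nonadj.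
have nbrs_F' : [set h (dx + 1); h (dx + k.-1)] != [set x; y].
  by apply: contraNneq x_nbrs => ->; rewrite set21.
by move: nbrs_nonadj; rewrite fill_F' // W_clique // W_nbr.
Qed.

End MinimalTriangulations.

Lemma induced_P6 (T : finType) (e : rel T) (v0 v1 v2 v3 v4 v5 : T) :
  simple_graph e ->
  e v0 v1 -> e v1 v2 -> e v2 v3 -> e v3 v4 -> e v4 v5 ->
  ~~ e v0 v2 -> ~~ e v0 v3 -> ~~ e v0 v4 -> ~~ e v0 v5 ->
  ~~ e v1 v3 -> ~~ e v1 v4 -> ~~ e v1 v5 ->
  ~~ e v2 v4 -> ~~ e v2 v5 -> ~~ e v3 v5 -> has_induced_P6 e.
Proof.
move=> [e_sym e_irr] e01 e12 e23 e34 e45 n02 n03 n04 n05 n13 n14 n15 n24 n25 n35.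
pose f (i : 'I_6) := nth v0 [:: v0; v1; v2; v3; v4; v5] i.
pose path_adj (i j : 'I_6) := (i.+1 == j :> nat) || (j.+1 == i :> nat).
have f_adj i j : e (f i) (f j) = path_adj i j.
  wlog ij : i j / i <= j.
    move=> adj; case: (leqP i j) => [/adj //|/ltnW/adj].
    by rewrite e_sym /path_adj orbC.
  case: i j ij => [[|[|[|[|[|[|//]]]]]] ?] [[|[|[|[|[|[|//]]]]]] ?] //= _;
    by rewrite /f /path_adj /= ?e_irr // (e01, e12, e23, e34, e45,
      negbTE n02, negbTE n03, negbTE n04, negbTE n05, negbTE n13, negbTE n14,
      negbTE n15, negbTE n24, negbTE n25, negbTE n35).
exists f; split=> // i j fij; apply: val_inj.
have adj_eq m : path_adj i m = path_adj j m by rewrite -!f_adj fij.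
move: (adj_eq (@Ordinal 6 0 isT)) (adj_eq (@Ordinal 6 1 isT))
  (adj_eq (@Ordinal 6 2 isT)) (adj_eq (@Ordinal 6 3 isT))
  (adj_eq (@Ordinal 6 4 isT)) (adj_eq (@Ordinal 6 5 isT)).
rewrite /path_adj /= {f_adj adj_eq fij}.
by case: i j => [[|[|[|[|[|[|//]]]]]] ?] [[|[|[|[|[|[|//]]]]]] ?].
Qed.

Section P6FromPrivateNeighbours.
Variables (T : finType) (e : rel T).
Hypothesis e_simple : simple_graph e.
Let e_sym : symmetric e := e_simple.1.

Variables (A B : {set T}) (x y a1 a2 b1 b2 : T).
Hypotheses (a1A : a1 \in A) (a2A : a2 \in A) (b1B : b1 \in B) (b2B : b2 \in B).
Hypotheses (x_a1 : e x a1) (a1_a2 : e a1 a2) (x_a2 : ~~ e x a2).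
Hypotheses (y_b1 : e y b1) (b1_b2 : e b1 b2) (y_b2 : ~~ e y b2).
Hypotheses (A_y : forall a, a \in A -> ~~ e a y) (B_x : forall b, b \in B -> ~~ e b x).
Hypothesis A_B : forall a b, a \in A -> b \in B -> ~~ e a b.

Variable D : {set T}.
Hypotheses (D_A : forall d a, d \in D -> a \in A -> ~~ e d a)
           (D_B : forall d b, d \in D -> b \in B -> ~~ e d b).

Local Ltac nonedge_by H := solve [apply: H => // | rewrite e_sym; apply: H => //].
Local Ltac P6_fact :=
  solve [ done | by rewrite e_sym | nonedge_by A_y | nonedge_by B_x | nonedge_by A_B
        | nonedge_by D_A | nonedge_by D_B ].

Lemma P6_of_adjacent : e x y -> has_induced_P6 e.
Proof. by move=> xy; apply: (@induced_P6 _ e a2 a1 x y b1 b2); P6_fact. Qed.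

Lemma P6_of_link :
  ~~ e x y -> connected_set e D -> x \in nbh e D -> y \in nbh e D -> has_induced_P6 e.
Proof.
move=> xy D_conn x_D y_D.
case: (link_cases e_sym D_conn x_D y_D).
- move=> [c cD /andP[xc yc]].
  by apply: (@induced_P6 _ e a2 a1 x c y b1); P6_fact.
- move=> [c [d [cD dD /and3P[xc cd dy] /andP[xd cy]]]].
  by apply: (@induced_P6 _ e a1 x c d y b1); P6_fact.
- move=> [c [u [v [cD uD vD /and3P[xc cu uv] /and3P[xu xv cv]]]]].
  by apply: (@induced_P6 _ e a2 a1 x c u v); P6_fact.
Qed.

End P6FromPrivateNeighbours.

Lemma fully_adjacentP (T : finType) (e : rel T) (Z C : {set T}) :
  reflect (fully_adjacent e Z C) [forall z in Z, forall c in C, e z c].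
Proof.
apply: (iffP forall_inP) => [full z c zZ cC | full z zZ].
  by move/forall_inP: (full z zZ); apply.
by apply/forall_inP => c; apply: full.
Qed.

Lemma P6_of_private_nonneighbours (T : finType) (e : rel T) F W C1 C2 x y c1 c2 :
  simple_graph e -> minimal_triangulation e F -> is_clique (fill e F) W ->
  component_of e W C1 -> component_of e W C2 -> C1 != C2 ->
  x \in nbh e C1 :\: nbh e C2 -> c1 \in C1 -> ~~ e x c1 ->
  y \in nbh e C2 :\: nbh e C1 -> c2 \in C2 -> ~~ e y c2 -> has_induced_P6 e.
Proof.
move=> e_simple F_mt W_clique C1_comp C2_comp C12 xN c1C xc1 yN c2C yc2.
have e_sym : symmetric e := e_simple.1.
have C1_nbh := component_nbh_sub e_sym C1_comp.
have C2_nbh := component_nbh_sub e_sym C2_comp.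
have [[_ C1W C1_conn _] [_ C2W C2_conn _]] := (C1_comp, C2_comp).
move: xN yN; rewrite !in_setD => /andP[xN2 xN1] /andP[yN1 yN2].
have [xW yW] := (subsetP C1_nbh x xN1, subsetP C2_nbh y yN2).
have [xC2 yC1] := (negbT (disjointFl C2W xW), negbT (disjointFl C1W yW)).
have [a1 [a2 [a1C a2C a12 xa1 xa2]]] := attachment_edge e_sym C1_conn xN1 c1C xc1.
have [b1 [b2 [b1C b2C b12 yb1 yb2]]] := attachment_edge e_sym C2_conn yN2 c2C yc2.
have C1_y a : a \in C1 -> ~~ e a y by move=> aC; apply: contra yN1; apply: mem_nbh.
have C2_x b : b \in C2 -> ~~ e b x by move=> bC; apply: contra xN2; apply: mem_nbh.
have C1_C2 a b : a \in C1 -> b \in C2 -> ~~ e a b.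
  move=> aC bC; apply: region_nonadjacent C1_nbh aC _ (negbT (disjointFr C2W bC)).
  by apply: contra C12 => bC1; rewrite (component_eq e_sym C1_comp C2_comp bC1 bC).
have [xy|xy] := boolP (e x y).
  exact: (P6_of_adjacent e_simple a1C a2C b1C b2C xa1 a12 xa2 yb1 b12 yb2
            C1_y C2_x C1_C2 xy).
have x_neq_y : x != y by apply: contraNneq yN1 => <-.
have [D [DW D_conn D_nbh xND yND]] :=
  pmc_nonadjacent_nbh e_sym F_mt W_clique xW yW x_neq_y xy.
have D_C1 d a : d \in D -> a \in C1 -> ~~ e d a.
  move=> dD aC; apply: region_nonadjacent D_nbh dD _ (negbT (disjointFr C1W aC)).
  by rewrite (disjointFl (connected_disjoint_region C1_nbh D_conn DW yND yC1 yN1) aC).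
have D_C2 d b : d \in D -> b \in C2 -> ~~ e d b.
  move=> dD bC; apply: region_nonadjacent D_nbh dD _ (negbT (disjointFr C2W bC)).
  by rewrite (disjointFl (connected_disjoint_region C2_nbh D_conn DW xND xC2 xN2) bC).
exact: (P6_of_link e_simple a1C a2C b1C xa1 a12 xa2 yb1 C1_y C2_x C1_C2 D_C1 D_C2 xy
          D_conn xND yND).
Qed.

Theorem lemma4 (T : finType) (e : rel T) (W C1 C2 : {set T}) :
  simple_graph e -> P6_free e ->
  potential_maximal_clique e W ->
  component_of e W C1 -> component_of e W C2 -> C1 != C2 ->
  fully_adjacent e (nbh e C1 :\: nbh e C2) C1 \/
  fully_adjacent e (nbh e C2 :\: nbh e C1) C2.
Proof.
move=> e_simple e_P6free [F [F_mt [W_clique _]]] C1_comp C2_comp C12.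
have [/fully_adjacentP|/forall_inPn[x xN /forall_inPn[c1 c1C xc1]]] :=
  boolP [forall z in nbh e C1 :\: nbh e C2, forall c in C1, e z c]; first by left.
right; apply/fully_adjacentP/forall_inP => y yN; apply/forall_inP => c2 c2C.
apply: contraT => yc2; exfalso; apply: e_P6free.
exact: (P6_of_private_nonneighbours e_simple F_mt W_clique C1_comp C2_comp C12
          xN c1C xc1 yN c2C yc2).
Qed.
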